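(* Let $\theta=\sqrt{5-\pi^2/3}$. For all $x\in[-2,0)$, $$g(x):=2x-2x^2-\frac43x^3+\frac75\theta\big(-x^2-2x\big)^{3/2}<0.$$ *)

From Stdlib Require Import Reals.
Open Scope R_scope.

Definition theta : R := sqrt (5 - PI ^ 2 / 3).

(* u^(3/2) for u >= 0, written as (sqrt u)^3 (Rpower needs u > 0, and u = 0 at x = -2). *)
Definition pow32 (u : R) : R := (sqrt u) ^ 3.

Definition g (x : R) : R :=
  2 * x - 2 * x ^ 2 - 4 / 3 * x ^ 3 + 7 / 5 * theta * pow32 (- x ^ 2 - 2 * x).

(* With t = -x in (0, 2], g x = A - B where B = t (2 + 2t - 4/3 t^2) > 0 and
   A = 7/5 theta (t (2 - t))^(3/2) >= 0, so it suffices that A^2 < B^2.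
   Since pi > 3 we have theta^2 < 2, and the comparison reduces to the
   polynomial inequality 98/25 t (2 - t)^3 < (2 + 2t - 4/3 t^2)^2 on (0, 2]. *)
From Stdlib Require Import Reals Lra Psatz.
Open Scope R_scope.

Lemma theta_sqr_lt : theta ^ 2 < 2.
Proof.
unfold theta; pose proof PI2_3_2.
destruct (Rle_dec 0 (5 - PI ^ 2 / 3)) as [Hpos|Hneg].
- rewrite pow2_sqrt by exact Hpos; nra.
- rewrite sqrt_neg_0 by lra; lra.
Qed.

Lemma pow32_sqr (u : R) : 0 <= u -> pow32 u ^ 2 = u ^ 3.
Proof.
intros Hu; unfold pow32.
rewrite <- pow_mult, Nat.mul_comm, pow_mult, pow2_sqrt by exact Hu.
reflexivity.
Qed.

(* The ratio of the right side to t (2 - t)^3 is minimal (about 4.08) at the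
   root (3 - sqrt 5)/2 of t^2 - 3t + 1. *)
Lemma quartic_ineq (t : R) :
  0 < t <= 2 -> 98/25 * t * (2 - t) ^ 3 < (2 + 2 * t - 4/3 * t ^ 2) ^ 2.
Proof.
intros Ht.
pose proof (pow2_ge_0 (t ^ 2 - 3 * t + 1)).
nra.
Qed.

Lemma Rlt_of_sqr_lt (a b : R) : 0 <= b -> a ^ 2 < b ^ 2 -> a < b.
Proof. intros; nra. Qed.

Lemma pow32_term_lt (t : R) :
  0 < t <= 2 -> 7/5 * theta * pow32 (t * (2 - t)) < t * (2 + 2 * t - 4/3 * t ^ 2).
Proof.
intros Ht.
assert (Hu : 0 <= t * (2 - t)) by nra.
assert (Hquad : 0 < 2 + 2 * t - 4/3 * t ^ 2) by nra.
apply Rlt_of_sqr_lt; [apply Rmult_le_pos; lra|].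
assert (Hcube : 0 <= t * (2 - t) ^ 3) by (apply Rmult_le_pos; [lra | apply pow_le; lra]).
pose proof theta_sqr_lt; pose proof (quartic_ineq t Ht).
replace ((7/5 * theta * pow32 (t * (2 - t))) ^ 2)
  with (49/25 * theta ^ 2 * (t * (2 - t)) ^ 3)
  by (rewrite <- (pow32_sqr _ Hu); field).
replace (49/25 * theta ^ 2 * (t * (2 - t)) ^ 3)
  with (t ^ 2 * (49/25 * theta ^ 2 * (t * (2 - t) ^ 3))) by ring.
replace ((t * (2 + 2 * t - 4/3 * t ^ 2)) ^ 2)
  with (t ^ 2 * (2 + 2 * t - 4/3 * t ^ 2) ^ 2) by ring.
apply Rmult_lt_compat_l; nra.
Qed.

Theorem lemmaA1 : forall x : R, -2 <= x < 0 -> g x < 0.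
Proof.
intros x Hx.
assert (Hlt := pow32_term_lt (- x) ltac:(lra)).
unfold g.
replace (- x ^ 2 - 2 * x) with (- x * (2 - - x)) by ring.
lra.
Qed.
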